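(* Let a graphical constant-sum game with $m$ agents be given and let $\hat{\mathbf{x}}^*=(\mathbf{x}^*_1,\ldots,\mathbf{x}^*_m)\in\Delta$ be a Nash equilibrium of it. Then for every $t\ge0$ and every function $\hat{\mathbf{x}}:[0,\infty)\to\Delta$ (with $\hat{\mathbf{p}}(\tau)=G(\hat{\mathbf{x}}(\tau))$), $$\int_0^t\langle\hat{\mathbf{x}}(\tau)-\hat{\mathbf{x}}^*,-\hat{\mathbf{p}}(\tau)\rangle\,d\tau\ \ge\ 0,$$ i.e. the game operator with shift $\hat{\mathbf{x}}^*$ is passive via the zero storage function. Moreover, if $\hat{\mathbf{x}}^*$ is fully mixed (every entry positive), then this integral equals $0$ for all such $\hat{\mathbf{x}}$ and $t$, i.e. the game operator with shift $\hat{\mathbf{x}}^*$ is lossless via the zero storage function.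
   Context: Agent $i\in\{1,\ldots,m\}$ has $n_i$ actions; $\Delta^{n}=\{\mathbf{x}\in\mathbb{R}^n:x_j\ge0,\sum_jx_j=1\}$ and $\Delta=\Delta^{n_1}\times\cdots\times\Delta^{n_m}$. A graphical game is given by matrices $\mathbf{A}^{ik}\in\mathbb{R}^{n_i\times n_k}$ for all ordered pairs $i\neq k$; for $\hat{\mathbf{x}}=(\mathbf{x}_1,\ldots,\mathbf{x}_m)\in\Delta$ the payoff vector of agent $i$ is $\mathbf{p}_i=\sum_{k\neq i}\mathbf{A}^{ik}\mathbf{x}_k$, and $G(\hat{\mathbf{x}})=\hat{\mathbf{p}}=(\mathbf{p}_1,\ldots,\mathbf{p}_m)$; agent $i$'s payoff is $\langle\mathbf{x}_i,\mathbf{p}_i\rangle$. It is graphical constant-sum if for every pair $\{i,k\}$ there is a constant $c^{\{i,k\}}$ with $\mathbf{A}^{ik}_{j\ell}+\mathbf{A}^{ki}_{\ell j}=c^{\{i,k\}}$ for all actions $j$ of $i$ and $\ell$ of $k$. A Nash equilibrium is $\hat{\mathbf{x}}^*\in\Delta$ such that for each $i$, $\mathbf{x}^*_i$ maximizes agent $i$'s payoff given the others' strategies $\mathbf{x}^*_k$, $k\neq i$. The game operator with shift $\hat{\mathbf{x}}^*$ has input $\hat{\mathbf{x}}-\hat{\mathbf{x}}^*$ and output $-\hat{\mathbf{p}}$, with no state; passivity via the zero storage function means the displayed integral inequality, losslessness means equality. *)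

From HB Require Import structures.
From mathcomp Require Import all_boot all_order all_algebra.
From mathcomp Require Import all_classical all_reals all_analysis.
Unset Printing Implicit Defensive.
Import Order.TTheory GRing.Theory Num.Theory.
Local Open Scope ring_scope.

Section GraphicalGames.
Variables (R : realType) (m : nat) (n : 'I_m -> nat).

Definition profile := forall i : 'I_m, 'I_(n i) -> R.

(* The game: matrices A i k : 'M_(n i, n k) (the diagonal blocks A i i are unused). *)
Definition game := forall i k : 'I_m, 'M[R]_(n i, n k).

Definition in_simplex {k : nat} (v : 'I_k -> R) : Prop :=
  (forall j, 0 <= v j) /\ \sum_(j < k) v j = 1.

Definition in_Delta (x : profile) : Prop := forall i, in_simplex (x i).

Definition inner {k : nat} (u v : 'I_k -> R) : R := \sum_(j < k) u j * v j.

(* payoff vector p_i = sum_{k <> i} A^{ik} x_k ;  G(x) = (p_1, ..., p_m) *)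
Definition payoff (A : game) (x : profile) (i : 'I_m) (j : 'I_(n i)) : R := \sum_(k < m | k != i) \sum_(l < n k) A i k j l * x k l.

Definition constant_sum (A : game) : Prop :=
  forall i k : 'I_m, i != k ->
    exists c : R, forall (j : 'I_(n i)) (l : 'I_(n k)), A i k j l + A k i l j = c.

Definition nash (A : game) (xs : profile) : Prop :=
  in_Delta xs /\
  forall i (y : 'I_(n i) -> R), in_simplex y ->
    inner y (payoff A xs i) <= inner (xs i) (payoff A xs i).

Definition fully_mixed (xs : profile) : Prop := forall i j, 0 < xs i j.

Definition supply (A : game) (xs x : profile) : R :=
  \sum_(i < m) inner (fun j => x i j - xs i j) (fun j => - payoff A x i j).

End GraphicalGames.

Arguments profile {R m} n.
Arguments game {R m} n.
Arguments in_Delta {R m n} x.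
Arguments payoff {R m n} A x i j.
Arguments constant_sum {R m n} A.
Arguments nash {R m n} A xs.
Arguments fully_mixed {R m n} xs.
Arguments supply {R m n} A xs x.

From HB Require Import structures.
From mathcomp Require Import all_boot all_order all_algebra.
From mathcomp Require Import all_classical all_reals all_analysis.
From mathcomp Require Import ring lra.

Set Implicit Arguments.
Unset Strict Implicit.
Unset Printing Implicit Defensive.
Import Order.TTheory GRing.Theory Num.Theory.
Local Open Scope ring_scope.
Local Open Scope classical_set_scope.

(* Write xs for the equilibrium and S(x, y) = sum_i <x_i, p_i(y)>.  The
   constant-sum condition makes S(x, y) + S(y, x) the same constant for all
   x, y in Delta, so S(x, x) = S(xs, xs) and the supply
   <x - xs, -G(x)> = S(xs, x) - S(x, x) equals S(xs, xs) - S(x, xs), i.e.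
   sum_i (<xs_i, p_i(xs)> - <x_i, p_i(xs)>), the total regret of x against the
   equilibrium payoffs.  It is nonnegative pointwise by the Nash property, and
   zero when xs is fully mixed, since then every pure action of agent i earns
   the same payoff against xs. *)

Lemma sum_offdiag_swap (V : nmodType) (I : finType) (F : I -> I -> V) :
  \sum_i \sum_(k | k != i) F i k = \sum_i \sum_(k | k != i) F k i.
Proof.
under eq_bigr do rewrite big_mkcond.
rewrite exchange_big; apply: eq_bigr => i _; rewrite [RHS]big_mkcond.
by apply: eq_bigr => k _; rewrite eq_sym.
Qed.

Section Simplex.
Variables (R : realType) (k : nat).

Lemma inner_sub_oppr (u v w : 'I_k -> R) :
  inner R (fun j => u j - v j) (fun j => - w j) = inner R v w - inner R u w.
Proof. by rewrite /inner -sumrB; apply: eq_bigr => j _; ring. Qed.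

Lemma inner_simplex_cst (y : 'I_k -> R) (c : R) :
  in_simplex R y -> inner R y (fun => c) = c.
Proof. by case=> _ y1; rewrite /inner -mulr_suml y1 mul1r. Qed.

Lemma in_simplex_delta (j : 'I_k) : in_simplex R (fun l => (l == j)%:R).
Proof.
split=> [l|]; first exact: ler0n.
by rewrite (bigD1 j) //= eqxx big1 ?addr0 // => l /negbTE ->.
Qed.

Lemma inner_delta (j : 'I_k) (p : 'I_k -> R) :
  inner R (fun l => (l == j)%:R) p = p j.
Proof.
rewrite /inner (bigD1 j) //= eqxx mul1r big1 ?addr0 // => l /negbTE ->.
by rewrite mul0r.
Qed.

Lemma best_response_full_support (v p : 'I_k -> R) :
  in_simplex R v -> (forall j, 0 < v j) ->
  (forall y, in_simplex R y -> inner R y p <= inner R v p) ->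
  forall j, p j = inner R v p.
Proof.
move=> v_simplex v_gt0 v_best j.
have p_le l : p l <= inner R v p.
  by rewrite -inner_delta; apply/v_best/in_simplex_delta.
have gaps_sum0 : \sum_(l < k) v l * (inner R v p - p l) = 0.
  under eq_bigr do rewrite mulrBr.
  by rewrite sumrB -mulr_suml; case: v_simplex => _ ->; rewrite mul1r subrr.
have gap_ge0 l : 0 <= v l * (inner R v p - p l).
  by rewrite mulr_ge0 ?subr_ge0 ?(ltW (v_gt0 l)).
have /psumr_eq0P gaps0 := gaps_sum0.
have /eqP := gaps0 (fun l _ => gap_ge0 l) j isT.
by rewrite mulf_eq0 gt_eqF //= subr_eq0 => /eqP.
Qed.

End Simplex.

Section ConstantSumGames.
Variables (R : realType) (m : nat) (n : 'I_m -> nat) (A : @game R m n).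
Implicit Types x y z w : @profile R m n.

Definition total_payoff x y : R := \sum_i inner R (x i) (payoff A y i).

Definition pair_payoff x y (i k : 'I_m) : R :=
  \sum_(j < n i) \sum_(l < n k) x i j * A i k j l * y k l.

Lemma total_payoff_pairs x y :
  total_payoff x y = \sum_i \sum_(k | k != i) pair_payoff x y i k.
Proof.
apply: eq_bigr => i _; rewrite /inner /payoff.
under eq_bigr do rewrite mulr_sumr.
rewrite exchange_big /=; apply: eq_bigr => k _; apply: eq_bigr => j _.
by rewrite mulr_sumr; apply: eq_bigr => l _; rewrite mulrA.
Qed.

Lemma pair_payoff_constant_sum x y i k (c : R) :
  (forall j l, A i k j l + A k i l j = c) ->
  in_simplex R (x i) -> in_simplex R (y k) ->
  pair_payoff x y i k + pair_payoff y x k i = c.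
Proof.
move=> Ac [_ xi1] [_ yk1].
rewrite /pair_payoff [X in _ + X]exchange_big /= -big_split /=.
transitivity (\sum_(j < n i) \sum_(l < n k) c * (x i j * y k l)).
  apply: eq_bigr => j _; rewrite -big_split; apply: eq_bigr => l _ /=.
  by rewrite -(Ac j l); ring.
under eq_bigr do rewrite -2!mulr_sumr yk1 mulr1.
by rewrite -mulr_sumr xi1 mulr1.
Qed.

Lemma total_payoff_symmetrized_const x y z w : constant_sum A ->
  in_Delta x -> in_Delta y -> in_Delta z -> in_Delta w ->
  total_payoff x y + total_payoff y x = total_payoff z w + total_payoff w z.
Proof.
move=> Acs xD yD zD wD.
rewrite !total_payoff_pairs (sum_offdiag_swap (pair_payoff y x)).
rewrite (sum_offdiag_swap (pair_payoff w z)) -!big_split /=.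
apply: eq_bigr => i _; rewrite -!big_split /=; apply: eq_bigr => k ki.
have [c Ac] := Acs i k ltac:(by rewrite eq_sym).
by rewrite !(pair_payoff_constant_sum Ac).
Qed.

Lemma supply_total_payoff xs x :
  supply A xs x = total_payoff xs x - total_payoff x x.
Proof. by rewrite /supply -sumrB; apply: eq_bigr => i _; rewrite inner_sub_oppr. Qed.

Lemma supply_regret xs x : constant_sum A -> in_Delta xs -> in_Delta x ->
  supply A xs x =
  \sum_i (inner R (xs i) (payoff A xs i) - inner R (x i) (payoff A xs i)).
Proof.
move=> Acs xsD xD; rewrite sumrB supply_total_payoff.
have := total_payoff_symmetrized_const Acs xD xsD xD xD.
have := total_payoff_symmetrized_const Acs xD xD xsD xsD.
rewrite /total_payoff; lra.
Qed.

Lemma supply_nash_ge0 xs x : constant_sum A -> nash A xs -> in_Delta x ->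
  0 <= supply A xs x.
Proof.
move=> Acs [xsD xs_best] xD; rewrite supply_regret //.
by apply: sumr_ge0 => i _; rewrite subr_ge0; apply/xs_best/xD.
Qed.

Lemma supply_nash_fully_mixed xs x : constant_sum A -> nash A xs ->
  fully_mixed xs -> in_Delta x -> supply A xs x = 0.
Proof.
move=> Acs [xsD xs_best] xs_gt0 xD; rewrite supply_regret // big1 // => i _.
have payoff_cst := best_response_full_support (xsD i) (xs_gt0 i) (xs_best i).
by rewrite (funext payoff_cst) !inner_simplex_cst ?subrr.
Qed.

End ConstantSumGames.

Theorem proposition6p1 (R : realType) (m : nat) (n : 'I_m -> nat)
  (A : @game R m n) (xs : @profile R m n) :
  constant_sum A -> nash A xs ->
  (forall (t : R) (x : R -> @profile R m n),
     0 <= t -> (forall tau, 0 <= tau -> in_Delta (x tau)) ->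
     (0 <= \int[lebesgue_measure]_(tau in `[0%R, t]) (supply A xs (x tau))%:E)%E)
  /\
  (fully_mixed xs ->
   forall (t : R) (x : R -> @profile R m n),
     0 <= t -> (forall tau, 0 <= tau -> in_Delta (x tau)) ->
     (\int[lebesgue_measure]_(tau in `[0%R, t]) (supply A xs (x tau))%:E = 0)%E).
Proof.
move=> Acs xs_nash; split=> [t x _ xD | xs_gt0 t x _ xD].
- apply: integral_ge0 => tau; rewrite /= in_itv /= => /andP[tau_ge0 _].
  by rewrite lee_fin (supply_nash_ge0 Acs xs_nash (xD _ tau_ge0)).
- rewrite (eq_integral (fun => 0%E)) ?integral0 // => tau.
  rewrite inE /= in_itv /= => /andP[tau_ge0 _].
  by rewrite (supply_nash_fully_mixed Acs xs_nash xs_gt0 (xD _ tau_ge0)).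
Qed.
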